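(* In the setting described in the context, let $\boldsymbol\tau=(\tau,r,<)$, $\boldsymbol\tau'=(\tau',r',<')$, $\boldsymbol\tau''=(\tau'',r'',<'')$ be three ordered rooted spanning trees of $\bar\Gamma$. Define the product $$M(\boldsymbol\tau',\boldsymbol\tau'')\circ_{\boldsymbol\tau} M(\boldsymbol\tau,\boldsymbol\tau') := U^\tau_{rr'}\,M(\boldsymbol\tau',\boldsymbol\tau'')\,U^\tau_{r'r}\,M(\boldsymbol\tau,\boldsymbol\tau'),$$ where $U^\tau_{rr'}$, $U^\tau_{r'r}$ act as diagonal (scalar) matrices, and set $C:=U^\tau_{rr'}U^{\tau'}_{r'r''}U^\tau_{r''r}\in\mathscr A_r$. Then $$M(\boldsymbol\tau',\boldsymbol\tau'')\circ_{\boldsymbol\tau} M(\boldsymbol\tau,\boldsymbol\tau') = C\cdot M(\boldsymbol\tau,\boldsymbol\tau'').$$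
   Context: $\bar\Gamma$ is a finite connected graph with $k$ vertices (multiple edges and loops allowed); $\bar f$ denotes the reverse of an oriented edge $f$. A groupoid representation assigns to every vertex $v$ a separable Hilbert space $\mathscr H_v$ and to each oriented edge $f$ from $v$ to $w$ a unitary $U_f:\mathscr H_v\to\mathscr H_w$ with $U_{\bar f}=U_f^*$; for a walk $\gamma$ through $f_1,\dots,f_m$ in order, $U(\gamma)=U_{f_m}\cdots U_{f_1}$. An ordered rooted spanning tree $\boldsymbol\tau=(\tau,r,<)$ is a spanning tree $\tau$ with root $r$ and a total order $u_1<\dots<u_k$ of the vertices with $u_1=r$. For vertices $x,y$, $U^\tau_{yx}:=U(\gamma)$ for the unique non-backtracking path $\gamma$ in $\tau$ from $x$ to $y$; $U^\tau_{xy}=(U^\tau_{yx})^*$. $\mathscr A_r\subset B(\mathscr H_r)$ is the $C^*$-algebra generated by $U(\gamma)$ for closed walks $\gamma$ at $r$. For two ordered rooted spanning trees $\boldsymbol\tau=(\tau,r,<)$ with vertices $u_1<\dots<u_k$ and $\boldsymbol\tau'=(\tau',r',<')$ with vertices $u'_1<'\dots<'u'_k$, define: $\sigma$ the permutation of $\{1,\dots,k\}$ with $u'_{\sigma(i)}=u_i$; $P$ the $k\times k$ permutation matrix with $Pe_i=e_{\sigma(i)}$; $c_i:=U^\tau_{r u_i}U^{\tau'}_{u_i r'}U^\tau_{r' r}$, a unitary in $\mathscr A_r$; $\Phi$ the diagonal matrix whose entry in position $\sigma(i)$ is $c_i$; and $M(\boldsymbol\tau,\boldsymbol\tau'):=\Phi^*P\in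 M_k(\mathscr A_r)$, acting on $\mathscr H_r^k$. (This matrix satisfies $M H_{\boldsymbol\tau}M^*=U^\tau_{rr'}H_{\boldsymbol\tau'}U^\tau_{r'r}$ for the matrix Hamiltonians.) Analogously $M(\boldsymbol\tau',\boldsymbol\tau'')\in M_k(\mathscr A_{r'})$ acts on $\mathscr H_{r'}^k$ and $M(\boldsymbol\tau,\boldsymbol\tau'')\in M_k(\mathscr A_r)$. *)

From HB Require Import structures.
From mathcomp Require Import all_boot all_order all_algebra.
From mathcomp Require Import complex.
From mathcomp Require Import reals.
From Stdlib Require Import ClassicalEpsilon.
Unset Printing Implicit Defensive.
Import Order.TTheory GRing.Theory Num.Theory.
Local Open Scope ring_scope.

(* the first argument and conjugate-linear in the second.                   *)
Record hilbert (R : realType) := Hilbert {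
  hcar :> lmodType R[i];
  inner : hcar -> hcar -> R[i];
  inner_linl : forall (a : R[i]) (x y z : hcar),
      inner (a *: x + y) z = a * inner x z + inner y z;
  inner_conj : forall x y : hcar, inner y x = (inner x y)^*;
  inner_ge0 : forall x : hcar, 0 <= inner x x;
  inner_eq0 : forall x : hcar, inner x x = 0 -> x = 0;
  inner_complete : forall u : nat -> hcar,
      (forall e : R[i], 0 < e -> exists N : nat, forall m n : nat,
          (N <= m)%N -> (N <= n)%N -> inner (u m - u n) (u m - u n) < e) ->
      exists l : hcar, forall e : R[i], 0 < e -> exists N : nat, forall n : nat,
          (N <= n)%N -> inner (u n - l) (u n - l) < e;
  inner_separable : exists d : nat -> hcar, forall (x : hcar) (e : R[i]),
      0 < e -> exists n : nat, inner (x - d n) (x - d n) < e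
}.

Arguments inner {R h}.
Arguments hcar {R}.

Definition adj {R : realType} {H1 H2 : hilbert R} (T : H1 -> H2) : H2 -> H1 :=
  epsilon (inhabits (fun _ => 0))
          (fun S : H2 -> H1 => forall a b, inner (T a) b = inner a (S b)).

Definition unitary {R : realType} {H1 H2 : hilbert R} (T : H1 -> H2) : Prop :=
  [/\ forall (a : R[i]) (x y : H1), T (a *: x + y) = a *: T x + T y,
      forall x y : H1, inner (T x) (T y) = inner x y &
      forall y : H2, exists x, T x = y].

Section Graph.
(* src/tgt: origin and terminus; rev f = the reverse edge \bar f.       *)
Variables (V D : finType) (src tgt : D -> V) (rev : D -> D).

Fixpoint walkb (x y : V) (p : seq D) : bool :=
  if p is f :: p' then (src f == x) && walkb (tgt f) y p' else x == y.

Fixpoint nbtb (p : seq D) : bool :=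
  match p with
  | f :: ((g :: _) as p') => (g != rev f) && nbtb p'
  | _ => true
  end.

Definition graph_connected : Prop :=
  forall x y : V, exists p : seq D, walkb x y p.

Definition spanning_tree (T : {set D}) : Prop :=
  [/\ forall f, f \in T -> rev f \in T,
      forall x y : V, exists p : seq D, walkb x y p && all (mem T) p &
      forall (x : V) (p : seq D), walkb x x p -> all (mem T) p -> nbtb p -> p = [::]].

(* Ordered rooted spanning tree (tau, r, <) with k = n.+1 vertices: the   *)
(* total order u_1 < ... < u_k is the bijection u : 'I_k -> V            *)
(* (u_(i+1) = u i), and the root is r = u_1 = u ord0.                      *)
Definition orst (n : nat) (T : {set D}) (u : 'I_n.+1 -> V) : Prop :=
  spanning_tree T /\ bijective u.

Definition orst_root (n : nat) (u : 'I_n.+1 -> V) : V := u ord0.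

Definition tpath (T : {set D}) (x y : V) : seq D :=
  match excluded_middle_informative
          (exists p : seq D, [&& walkb x y p, all (mem T) p & nbtb p]) with
  | left h => xchoose h
  | right _ => [::]
  end.

Variable R : realType.
Variable H : V -> hilbert R.
Variable U : forall f : D, H (src f) -> H (tgt f).

(* transport along an equality of vertices (0 if they differ) *)
Definition castH (x y : V) (h : H x) : H y :=
  match x =P y with
  | ReflectT e => eq_rect x (fun v => H v) h y e
  | ReflectF _ => 0
  end.

Fixpoint vend (x : V) (p : seq D) : V :=
  if p is f :: p' then vend (tgt f) p' else x.

Fixpoint Uw (x : V) (p : seq D) : H x -> H (vend x p) :=
  match p as p0 return H x -> H (vend x p0) with
  | [::] => fun h => h
  | f :: p' => fun h => @Uw (tgt f) p' (@U f (castH x (src f) h))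
  end.

Definition groupoid_rep : Prop :=
  (forall f, unitary (@U f)) /\
  (forall f (a : H (src f)) (b : H (tgt f)),
      inner (@U f a) b = inner a (castH (tgt (rev f)) (src f) (@U (rev f) (castH (tgt f) (src (rev f)) b)))).

Definition Ut (T : {set D}) (y x : V) : H x -> H y :=
  fun h => castH (vend x (tpath T x y)) y (@Uw x (tpath T x y) h).

Definition opmx (n : nat) (x y : V) := 'I_n.+1 -> 'I_n.+1 -> H x -> H y.

Definition mmul n (a b c : V) (A : opmx n b c) (B : opmx n a b) : opmx n a c :=
  fun i j h => \sum_(l < n.+1) A i l (B l j h).

Definition diagop n (x y : V) (S : H x -> H y) : opmx n x y :=
  fun i j => if i == j then S else (fun _ => 0).

Definition adjmx n (x : V) (A : opmx n x x) : opmx n x x :=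
  fun i j => adj (A j i).

Definition uinv n (u : 'I_n.+1 -> V) (y : V) : 'I_n.+1 :=
  odflt ord0 [pick i | u i == y].

Section M.
Variables (n : nat) (T T' : {set D}) (u u' : 'I_n.+1 -> V).
Let r := orst_root n u.
Let r' := orst_root n u'.
Definition sigma (i : 'I_n.+1) : 'I_n.+1 := uinv n u' (u i).
Definition sigmainv (a : 'I_n.+1) : 'I_n.+1 := uinv n u (u' a).
Definition cop (i : 'I_n.+1) : H r -> H r :=
  fun h => Ut T r (u i) (Ut T' (u i) r' (Ut T r' r h)).
Definition Pmx : opmx n r r :=
  fun a b => if a == sigma b then (fun h => h) else (fun _ => 0).
Definition Phimx : opmx n r r :=
  fun a b => if a == b then cop (sigmainv a) else (fun _ => 0).
Definition Mmx : opmx n r r := mmul n r r r (adjmx n r Phimx) Pmx.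
End M.

End Graph.

From HB Require Import structures.
From mathcomp Require Import all_boot all_order all_algebra.
From mathcomp Require Import complex.
From mathcomp Require Import reals.
From Stdlib Require Import ClassicalEpsilon.
Import Order.TTheory GRing.Theory Num.Theory.
Local Open Scope ring_scope.

(* M(tau, tau') is a generalized permutation matrix: column j has a single
   nonzero entry, in row sigma(j), equal to U^tau_{rr'} U^tau'_{r'u_j} U^tau_{u_j r}.
   In the product the permutations compose to that of M(tau, tau''), and the
   inner factors cancel because U^tau_{xy} U^tau_{yx} = 1 in every tree: the tree
   path from y to x is the reverse of the one from x to y (non-backtracking paths
   in a tree are unique), and U_{\bar f} = U_f^*. *)

Set Implicit Arguments.
Unset Strict Implicit.

Section Walks.
Variables (V D : finType) (src tgt : D -> V) (rv : D -> D).
Hypothesis rvK : involutive rv.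
Hypothesis src_rv : forall f, src (rv f) = tgt f.

Local Notation walk := (walkb V D src tgt).
Local Notation nbt := (nbtb D rv).

Lemma tgt_rv f : tgt (rv f) = src f.
Proof. by rewrite -src_rv rvK. Qed.

Definition rev_walk (p : seq D) : seq D := rev (map rv p).

Lemma rev_walk_cons f p : rev_walk (f :: p) = rcons (rev_walk p) (rv f).
Proof. by rewrite /rev_walk /= rev_cons. Qed.

Lemma walkb_cat x z y p q : walk x z p -> walk z y q -> walk x y (p ++ q).
Proof.
elim: p x => [|f p IHp] x /=; first by move/eqP->.
by case/andP=> -> /IHp.
Qed.

Lemma walkb_rev x y p : walk x y p -> walk y x (rev_walk p).
Proof.
elim: p x => [|f p IHp] x /=; first by move/eqP->.
case/andP=> /eqP <- /IHp Wp; rewrite rev_walk_cons -cats1.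
by apply: walkb_cat Wp _; rewrite /= src_rv tgt_rv !eqxx.
Qed.

Lemma all_rev_walk (A : pred D) p :
  (forall f, A f -> A (rv f)) -> all A p -> all A (rev_walk p).
Proof. by move=> Arv Ap; rewrite all_rev all_map; apply: sub_all Ap => f /Arv. Qed.

Definition nbt_step (f g : D) : bool := g != rv f.

Lemma nbtb_path f p : nbt (f :: p) = path nbt_step f p.
Proof. by elim: p f => [|g p IHp] f //=; rewrite -IHp. Qed.

Lemma nbtbE p : nbt p = sorted nbt_step p.
Proof. by case: p => // f p; apply: nbtb_path. Qed.

Lemma nbtb_behead f p : nbt (f :: p) -> nbt p.
Proof. by rewrite !nbtbE; apply: path_sorted. Qed.

Lemma nbtb_rev p : nbt p -> nbt (rev_walk p).
Proof.
rewrite !nbtbE /rev_walk rev_sorted sorted_map.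
by apply: sub_sorted => f g; rewrite /relpre /nbt_step /= rvK eq_sym.
Qed.

Lemma nbtb_cat s f t : nbt (rcons s f) -> nbt (f :: t) -> nbt (s ++ f :: t).
Proof. by rewrite !nbtbE sorted_cat_cons /= => -> ->. Qed.

(* Cancels backtracking pairs [f, rv f]; the endpoints of the walk are kept. *)
Definition cons_nbt (f : D) (q : seq D) : seq D :=
  if q is g :: q' then (if g == rv f then q' else f :: q) else [:: f].

Definition nbt_reduce (p : seq D) : seq D := foldr cons_nbt [::] p.

Lemma nbt_reduceP (A : pred D) x y p : walk x y p -> all A p ->
  [&& walk x y (nbt_reduce p), all A (nbt_reduce p) & nbt (nbt_reduce p)].
Proof.
elim: p x => [|f p IHp] x /=; first by move=> ->.
case/andP=> /eqP srcf /IHp IH /andP[Af /IH /and3P[W Ap N]].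
rewrite /cons_nbt; case: (nbt_reduce p) W Ap N => [|g q] /=.
  by move=> /eqP <- _ _; rewrite srcf !eqxx Af.
case/andP=> /eqP srcg W /andP[Ag Aq] N.
case: eqP => [gE|/eqP gN].
  by rewrite Aq (nbtb_behead N) andbT; move: W; rewrite gE tgt_rv srcf => ->.
by rewrite /= srcf srcg !eqxx W Af Ag Aq gN N.
Qed.

End Walks.

Section Trees.
Variables (V D : finType) (src tgt : D -> V) (rv : D -> D).
Hypothesis rvK : involutive rv.
Hypothesis src_rv : forall f, src (rv f) = tgt f.
Variable T : {set D}.
Hypothesis tree : spanning_tree V D src tgt rv T.

Local Notation walk := (walkb V D src tgt).
Local Notation nbt := (nbtb D rv).
Local Notation tree_walk x y p := [&& walk x y p, all (mem T) p & nbt p].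

Lemma tree_walk_unique x y p q : tree_walk x y p -> tree_walk x y q -> p = q.
Proof.
case: tree => Trv _ Tacyclic.
elim: p x q => [|f p IHp] x [|g q] //.
- by move=> /and3P[/eqP-> _ _] /and3P[W A N]; move: (Tacyclic y _ W A N).
- by move=> /and3P[W A N] /and3P[/eqP yx _ _]; subst y; move: (Tacyclic x _ W A N).
move=> Tfp Tgq.
have behead_tree_walk h s : tree_walk x y (h :: s) -> tree_walk (tgt h) y s.
  by case/and3P=> /= /andP[_ ->] /andP[_ ->] /nbtb_behead.
have [fg|fNg] := eqVneq f g.
  rewrite -fg in Tgq *; congr (_ :: _).
  exact: IHp (behead_tree_walk _ _ Tfp) (behead_tree_walk _ _ Tgq).
case/and3P: Tfp => Wf Afp Nf; case/and3P: Tgq => Wg Agq Ng.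
(* Otherwise the reverse of [f :: p] followed by [g :: q] is a nonempty
   non-backtracking cycle in the tree. *)
have W := walkb_cat (walkb_rev rvK src_rv Wf) Wg.
have A : all (mem T) (rev_walk rv (f :: p) ++ g :: q).
  by rewrite all_cat all_rev_walk.
have N : nbt (rev_walk rv (f :: p) ++ g :: q).
  rewrite rev_walk_cons cat_rcons nbtb_cat -?rev_walk_cons ?nbtb_rev //=.
  by rewrite rvK eq_sym fNg; apply: Ng.
by move: (Tacyclic y _ W A N); case: (rev_walk rv (f :: p)).
Qed.

Lemma tpathP x y : tree_walk x y (tpath V D src tgt rv T x y).
Proof.
rewrite /tpath; case: excluded_middle_informative => [ex|noex].
  exact: xchooseP ex.
case: tree => _ /(_ x y) [p /andP[W A]] _.
by case: noex; exists (nbt_reduce rv p); apply: nbt_reduceP.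
Qed.

Lemma tpath_sym x y :
  tpath V D src tgt rv T y x = rev_walk rv (tpath V D src tgt rv T x y).
Proof.
apply: tree_walk_unique (tpathP y x) _.
case: tree (tpathP x y) => Trv _ _ /and3P[W A N].
by rewrite walkb_rev // nbtb_rev // all_rev_walk.
Qed.

End Trees.

Section InnerProduct.
Variables (R : realType) (K : hilbert R).

Lemma inner0l (z : K) : inner 0 z = 0.
Proof.
have := inner_linl R K 1 0 0 z; rewrite scaler0 addr0 mul1r => e.
by apply: (addrI (inner 0 z)); rewrite addr0 -e.
Qed.

Lemma inner0r (z : K) : inner z 0 = 0.
Proof. by rewrite (inner_conj R K) inner0l conjC0. Qed.

Lemma innerBl (s t z : K) : inner (s - t) z = inner s z - inner t z.
Proof.
by have := inner_linl R K (-1) t s z; rewrite scaleN1r mulN1r addrC => ->; rewrite addrC.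
Qed.

Lemma inner_injr (s t : K) : (forall a, inner a s = inner a t) -> s = t.
Proof.
move=> st; apply/eqP; rewrite -subr_eq0; apply/eqP/(inner_eq0 R K).
by rewrite innerBl [inner s _](inner_conj R K) [inner t _](inner_conj R K) !st subrr.
Qed.

End InnerProduct.

Section Adjoint.
Variables (R : realType) (K1 K2 : hilbert R) (A : K1 -> K2) (A' : K2 -> K1).
Hypothesis adjointA : forall a b, inner (A a) b = inner a (A' b).

Lemma adjE : adj A =1 A'.
Proof.
move=> b; have adjA := epsilon_spec (inhabits (fun _ : K2 => (0 : K1)))
  (fun S : K2 -> K1 => forall a b, inner (A a) b = inner a (S b)) (ex_intro _ A' adjointA).
by apply: inner_injr => a; rewrite -adjA adjointA.
Qed.

Lemma adjoint0 : A' 0 = 0.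
Proof. by apply: inner_injr => a; rewrite -adjointA !inner0r. Qed.

Lemma adj0 : adj A 0 = 0.
Proof. by rewrite adjE adjoint0. Qed.

End Adjoint.

Section Transport.
Variables (V D : finType) (src tgt : D -> V) (rv : D -> D).
Hypothesis rvK : involutive rv.
Hypothesis src_rv : forall f, src (rv f) = tgt f.
Variables (R : realType) (H : V -> hilbert R) (U : forall f : D, H (src f) -> H (tgt f)).
Hypothesis HU : groupoid_rep V D src tgt rv R H U.

Local Notation walk := (walkb V D src tgt).
Local Notation castH := (castH V R H).

Lemma castH_id x (h : H x) : castH x x h = h.
Proof. by rewrite /castH; case: eqP => // e; rewrite (eq_axiomK e). Qed.

Lemma castH_comp x y z (h : H x) : x = y -> castH y z (castH x y h) = castH x z h.
Proof. by move=> xy; subst y; rewrite castH_id. Qed.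

(* [U(p)] as an operator [H x -> H y]; it is [0] unless [p] ends at [y]. *)
Definition Uwalk x y p (h : H x) : H y :=
  castH (vend V D tgt x p) y (Uw V D src tgt R H U x p h).

Lemma Uwalk_cat x z y p q (h : H x) : walk x z p ->
  Uwalk y (p ++ q) h = Uwalk y q (Uwalk z p h).
Proof.
elim: p x h => [|f p IHp] x h /=; last by case/andP=> _ W; apply: IHp W.
by move/eqP=> xz; subst z; rewrite /Uwalk /= castH_id.
Qed.

Lemma U_revK f (a : H (src f)) :
  castH (tgt (rv f)) (src f) (U (castH (tgt f) (src (rv f)) (U a))) = a.
Proof.
case: HU => Uunitary Uadj; apply: inner_injr => b.
by rewrite -Uadj; case: (Uunitary f) => _ -> _.
Qed.

Lemma Uwalk_revK x y p (h : H x) : walk x y p ->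
  Uwalk x (rev_walk rv p) (Uwalk y p h) = h.
Proof.
elim: p x h => [|f p IHp] x h /=.
  by move/eqP=> xy; subst y; rewrite /Uwalk /= !castH_id.
case/andP=> /eqP srcf W.
rewrite rev_walk_cons -cats1 (Uwalk_cat _ _ _ (walkb_rev rvK src_rv W)).
have -> : Uwalk (tgt f) (rev_walk rv p) (Uwalk y (f :: p) h) = U (castH x (src f) h).
  exact: IHp.
rewrite /Uwalk /= -(castH_comp _ _ (tgt_rv rvK src_rv f)) U_revK.
by rewrite castH_comp ?castH_id.
Qed.

Lemma Uwalk_isometry x y p (a b : H x) : walk x y p ->
  inner (Uwalk y p a) (Uwalk y p b) = inner a b.
Proof.
elim: p x a b => [|f p IHp] x a b /=.
  by move/eqP=> xy; subst y; rewrite /Uwalk /= !castH_id.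
case/andP=> /eqP srcf W; subst x; rewrite /Uwalk /= -/(Uwalk y p _) -/(Uwalk y p _).
by rewrite IHp // !castH_id; case: HU => /(_ f) [_ -> _].
Qed.

Section Tree.
Variable T : {set D}.
Hypothesis tree : spanning_tree V D src tgt rv T.

Local Notation Ut := (Ut V D src tgt rv R H U T).

Lemma UtK x y (h : H y) : Ut y x (Ut x y h) = h.
Proof.
rewrite /Ut -/(Uwalk _ _ _) -/(Uwalk _ _ _) (tpath_sym rvK src_rv tree).
by apply: Uwalk_revK; case/and3P: (tpathP rvK src_rv tree y x).
Qed.

Lemma Ut_isometry x y (a b : H x) : inner (Ut y x a) (Ut y x b) = inner a b.
Proof.
rewrite /Ut -/(Uwalk _ _ _) -/(Uwalk _ _ _); apply: Uwalk_isometry.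
by case/and3P: (tpathP rvK src_rv tree x y).
Qed.

Lemma Ut_adjoint x y (a : H x) (b : H y) : inner (Ut y x a) b = inner a (Ut x y b).
Proof. by rewrite -{1}(UtK x b) Ut_isometry. Qed.

Lemma Ut0 x y : Ut y x 0 = 0.
Proof. exact: adjoint0 (@Ut_adjoint y x). Qed.

End Tree.
End Transport.

Lemma f_uinv (V : finType) n (u : 'I_n.+1 -> V) : bijective u -> cancel (uinv V n u) u.
Proof.
case=> g gK Kg y; rewrite /uinv; case: pickP => [i /eqP //|noi].
by move: (noi (g y)); rewrite Kg eqxx.
Qed.

Lemma uinv_f (V : finType) n (u : 'I_n.+1 -> V) : bijective u -> cancel u (uinv V n u).
Proof. by move=> bij_u i; apply: (bij_inj bij_u); rewrite f_uinv. Qed.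

Lemma u_sigma (V : finType) n (u u' : 'I_n.+1 -> V) j :
  bijective u' -> u' (sigma V n u u' j) = u j.
Proof. by move=> bij_u'; apply: f_uinv. Qed.

Lemma sigma_trans (V : finType) n (u u' u'' : 'I_n.+1 -> V) j : bijective u' ->
  sigma V n u' u'' (sigma V n u u' j) = sigma V n u u'' j.
Proof. by move=> bij_u'; rewrite /sigma f_uinv. Qed.

Section OperatorMatrices.
Variables (V : finType) (R : realType) (H : V -> hilbert R) (n : nat).

Local Notation opmx := (opmx V R H n).
Local Notation mmul := (mmul V R H n).

Lemma mmul_diagl x y z (S : H y -> H z) (B : opmx x y) i j h :
  mmul x y z (diagop V R H n y z S) B i j h = S (B i j h).
Proof. by rewrite /mmul (big_only1 i) // /diagop ?eqxx // => l /negbTE; rewrite eq_sym => ->. Qed.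

Lemma mmul_single_col x y z (A : opmx y z) (B : opmx x y) i j h l0 :
  (forall l, l != l0 -> B l j h = 0) -> (forall l, A i l 0 = 0) ->
  mmul x y z A B i j h = A i l0 (B l0 j h).
Proof. by move=> Bj0 A0; rewrite /mmul (big_only1 l0) // => l /Bj0 -> _. Qed.

End OperatorMatrices.

Section TreeMatrix.
Variables (V D : finType) (src tgt : D -> V) (rv : D -> D).
Hypothesis rvK : involutive rv.
Hypothesis src_rv : forall f, src (rv f) = tgt f.
Variables (R : realType) (H : V -> hilbert R) (U : forall f : D, H (src f) -> H (tgt f)).
Hypothesis HU : groupoid_rep V D src tgt rv R H U.
Variables (n : nat) (T T' : {set D}) (u u' : 'I_n.+1 -> V).
Hypotheses (tree : spanning_tree V D src tgt rv T) (tree' : spanning_tree V D src tgt rv T').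
Hypotheses (bij_u : bijective u) (bij_u' : bijective u').

Local Notation Ut := (Ut V D src tgt rv R H U).
Local Notation r := (orst_root V n u).
Local Notation r' := (orst_root V n u').
Local Notation Ut0 := (Ut0 rvK src_rv HU).
Local Notation Ut_adjoint := (Ut_adjoint rvK src_rv HU).

Lemma MmxE a b h : Mmx V D src tgt rv R H U n T T' u u' a b h =
  if a == sigma V n u u' b then Ut T r r' (Ut T' r' (u b) (Ut T (u b) r h)) else 0.
Proof.
have cop_adjoint i k c : inner (cop V D src tgt rv R H U n T T' u u' i k) c =
    inner k (Ut T r r' (Ut T' r' (u i) (Ut T (u i) r c))).
  by rewrite /cop !Ut_adjoint.
have zero_adjoint (k c : H r) : inner ((fun=> 0 : H r) k) c = inner k ((fun=> 0) c).
  by rewrite inner0l inner0r.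
rewrite /Mmx /mmul (big_only1 (sigma V n u u' b)) //.
  rewrite /Pmx eqxx /adjmx /Phimx (eq_sym a); case: eqP => _.
    by rewrite /sigmainv /sigma f_uinv // uinv_f // (adjE (cop_adjoint b)).
  by rewrite (adjE zero_adjoint).
move=> l lN _; rewrite /Pmx (negbTE lN) /adjmx /Phimx.
by case: eqP => _; [apply: adj0 (cop_adjoint _) | apply: adj0 zero_adjoint].
Qed.

Lemma Mmx0 a b : Mmx V D src tgt rv R H U n T T' u u' a b 0 = 0.
Proof. by rewrite MmxE (Ut0 tree) (Ut0 tree') (Ut0 tree); case: ifP. Qed.

End TreeMatrix.

Section Composition.
Variables (V D : finType) (src tgt : D -> V) (rv : D -> D).
Hypothesis rvK : involutive rv.
Hypothesis src_rv : forall f, src (rv f) = tgt f.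
Variables (R : realType) (H : V -> hilbert R) (U : forall f : D, H (src f) -> H (tgt f)).
Hypothesis HU : groupoid_rep V D src tgt rv R H U.
Variables (n : nat) (T T' T'' : {set D}) (u u' u'' : 'I_n.+1 -> V).
Hypotheses (tree : spanning_tree V D src tgt rv T) (bij_u : bijective u).
Hypotheses (tree' : spanning_tree V D src tgt rv T') (bij_u' : bijective u').
Hypotheses (tree'' : spanning_tree V D src tgt rv T'') (bij_u'' : bijective u'').

Local Notation Ut := (Ut V D src tgt rv R H U).
Local Notation UtK := (UtK rvK src_rv HU).
Local Notation Ut0 := (Ut0 rvK src_rv HU).
Local Notation MmxE := (MmxE rvK src_rv HU).
Local Notation Mmx T T' u u' := (Mmx V D src tgt rv R H U n T T' u u').
Local Notation mmul := (mmul V R H n).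
Local Notation diagop := (diagop V R H n).
Local Notation r := (orst_root V n u).
Local Notation r' := (orst_root V n u').
Local Notation r'' := (orst_root V n u'').

Lemma Mmx_comp i j h :
  mmul r r' r (diagop r' r (Ut T r r'))
    (mmul r r' r' (Mmx T' T'' u' u'')
      (mmul r r r' (diagop r r' (Ut T r' r)) (Mmx T T' u u'))) i j h
  = Ut T r r' (Ut T' r' r'' (Ut T r'' r (Mmx T T'' u u'' i j h))).
Proof.
rewrite !mmul_diagl (mmul_single_col (l0 := sigma V n u u' j)); first last.
- by move=> l; rewrite (Mmx0 rvK src_rv HU tree' tree'').
- by move=> l lN; rewrite mmul_diagl (MmxE tree tree') // (negbTE lN) (Ut0 tree).
rewrite mmul_diagl (MmxE tree tree') // eqxx (UtK tree) (MmxE tree' tree'') //.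
rewrite sigma_trans // u_sigma // (MmxE tree tree'') //.
case: eqP => _; last by rewrite !(Ut0 tree, Ut0 tree').
by rewrite (UtK tree) (UtK tree').
Qed.

End Composition.

Theorem mainTheorem2
  (V D : finType) (src tgt : D -> V) (rev : D -> D)
  (Hrev_inv : involutive rev) (Hrev_nofix : forall f, rev f != f)
  (Hrev_src : forall f, src (rev f) = tgt f)
  (Hconn : graph_connected V D src tgt)
  (n : nat) (HV : #|V| = n.+1)
  (R : realType) (H : V -> hilbert R)
  (U : forall f : D, H (src f) -> H (tgt f))
  (HU : groupoid_rep V D src tgt rev R H U)
  (T T' T'' : {set D}) (u u' u'' : 'I_n.+1 -> V)
  (Ho : orst V D src tgt rev n T u) (Ho' : orst V D src tgt rev n T' u')
  (Ho'' : orst V D src tgt rev n T'' u'') :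
  let r := orst_root V n u in let r' := orst_root V n u' in let r'' := orst_root V n u'' in
  let C : H r -> H r :=
    fun h => Ut V D src tgt rev R H U T r r' (Ut V D src tgt rev R H U T' r' r'' (Ut V D src tgt rev R H U T r'' r h)) in
  forall (i j : 'I_n.+1) (h : H r),
    mmul V R H n r r' r (diagop V R H n r' r (Ut V D src tgt rev R H U T r r'))
      (mmul V R H n r r' r' (Mmx V D src tgt rev R H U n T' T'' u' u'')
        (mmul V R H n r r r' (diagop V R H n r r' (Ut V D src tgt rev R H U T r' r))
           (Mmx V D src tgt rev R H U n T T' u u'))) i j h
    = mmul V R H n r r r (diagop V R H n r r C)
        (Mmx V D src tgt rev R H U n T T'' u u'') i j h.
Proof.
move=> r r' r'' C i j h.
case: Ho Ho' Ho'' => [tree bij_u] [tree' bij_u'] [tree'' bij_u''].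
by rewrite [RHS]mmul_diagl; apply: Mmx_comp.
Qed.
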